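(* Let $X=\{x_j:j\in J\}\subset\mathbb{R}^2$ be finite and let $\mathcal{D}$ be any farthest point Delaunay triangulation of $X$. A point $s$ is the $1$-centre of $X$ if and only if there is a face $D$ of $\mathcal{D}$ such that $s\in\mathrm{int}(D)$ and $s\in V_D$.
   Context: The $1$-centre of $X$ is the centre of the minimum enclosing circle of $X$. $V(x_j)=\{s:\|s-x_j\|=\max_{i\in J}\|s-x_i\|\}$ are the regions of the farthest point Voronoi diagram. A farthest point Delaunay triangulation of $X$ is a triangulation of the extreme points of $X$ in which the circumcircle of every triangle encloses all of $X$; its faces are its vertices, edges and triangles. For a face $D$ with vertex index set $J_D$, $V_D=\bigcap_{j\in J_D}V(x_j)$. $\mathrm{int}$ denotes relative interior, with $\mathrm{int}(\{x\})=\{x\}$. *)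

From HB Require Import structures.
From mathcomp Require Import all_boot all_order all_algebra.
From mathcomp Require Import reals.
Set Implicit Arguments. Unset Strict Implicit. Unset Printing Implicit Defensive.
Import Order.TTheory GRing.Theory Num.Theory.
Local Open Scope ring_scope.

Section Planar.
Variable R : realType.
Definition pt := (R * R)%type.

Definition dist (p q : pt) : R :=
  Num.sqrt ((p.1 - q.1) ^+ 2 + (p.2 - q.2) ^+ 2).

Variables (J : finType) (x : J -> pt).

Definition comb (l : J -> R) (S : {set J}) : pt :=
  (\sum_(j in S) l j * (x j).1, \sum_(j in S) l j * (x j).2).

Definition conv (S : {set J}) (p : pt) : Prop :=
  exists l : J -> R, (forall j, j \in S -> 0 <= l j) /\
    \sum_(j in S) l j = 1 /\ comb l S = p.

(* relative interior of the simplex with vertices {x_j : j in S}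
   (positive barycentric coordinates; int {x} = {x}) *)
Definition relint (S : {set J}) (p : pt) : Prop :=
  exists l : J -> R, (forall j, j \in S -> 0 < l j) /\
    \sum_(j in S) l j = 1 /\ comb l S = p.

Definition aff_indep (S : {set J}) : Prop :=
  forall l : J -> R, \sum_(j in S) l j = 0 -> comb l S = (0, 0) ->
    forall j, j \in S -> l j = 0.

Definition extreme (j : J) : Prop := ~ conv [set i | i != j] (x j).

(* K is a triangulation of the extreme points of X: a geometric simplicial
   complex (faces = vertices, edges, triangles) whose vertices are exactly the
   extreme points of X and whose union is conv X. *)
Definition triangulation (K : {set {set J}}) : Prop :=
  [/\ forall D, D \in K -> D != set0 /\ (#|D| <= 3)%N /\ aff_indep D,
      forall D E : {set J}, D \in K -> E \subset D -> E != set0 -> E \in K,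
      forall j, [set j] \in K <-> extreme j,
      forall D E, D \in K -> E \in K ->
        forall p, conv D p /\ conv E p <-> conv (D :&: E) p &
      forall p, conv [set: J] p <-> exists2 D, D \in K & conv D p].

Definition farthest_delaunay (K : {set {set J}}) : Prop :=
  triangulation K /\
  forall D, D \in K -> #|D| = 3%N ->
    exists (c : pt) (r : R), (forall j, j \in D -> dist c (x j) = r) /\
                             (forall i, dist c (x i) <= r).

Definition maxdist (s : pt) : R := \big[Num.max/0]_(i : J) dist s (x i).

Definition one_centre (s : pt) : Prop := forall t, maxdist s <= maxdist t.

Definition Vor (j : J) (s : pt) : Prop := dist s (x j) = maxdist s.

Definition VorD (D : {set J}) (s : pt) : Prop := forall j, j \in D -> Vor j s.
End Planar.

From HB Require Import structures.
From mathcomp Require Import all_boot all_order all_algebra.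
From mathcomp Require Import reals.
From mathcomp Require Import ring lra.
From Stdlib Require Import Classical.
Set Implicit Arguments. Unset Strict Implicit.
Import Order.TTheory GRing.Theory Num.Theory.
Local Open Scope ring_scope.

(* If [s] is a positive barycentre of points all at the largest distance
   [r(s)] from [s], then by the parallel axis theorem their mean squared
   distance from any [t] is [r(s)^2 + |t - s|^2], so [r(t) >= r(s)].
   Conversely, at the 1-centre every direction has a farthest point weakly
   behind it, so by a planar Gordan argument [s] is in the convex hull of the
   farthest points, hence in the relative interior of a face [D].  If [D] lies
   in a triangle with circumcentre [c], the circumradius bounds [r(c)], and the
   parallel axis theorem at [c] with [r(s)^2 + |c - s|^2 <= r(c)^2] forces the
   vertices of [D] to be farthest.  Otherwise [D] is a vertex [x_a = s], which
   being extreme cannot be a convex combination of other farthest points, or an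
   edge lying in no triangle, in which case [X] is collinear and an extreme
   point that is not farthest would lie between the farthest points on the
   two sides of [s]. *)

Section Plane.
Variable R : realType.
Local Notation pt := (pt R).
Implicit Types (p q s t : pt).

Definition vsub p q : pt := (p.1 - q.1, p.2 - q.2).
Definition dot (u v : pt) : R := u.1 * v.1 + u.2 * v.2.
Definition cross (u v : pt) : R := u.1 * v.2 - u.2 * v.1.
Definition along p (t : R) (v : pt) : pt := (p.1 + t * v.1, p.2 + t * v.2).
Definition sqdist p q : R := (p.1 - q.1) ^+ 2 + (p.2 - q.2) ^+ 2.

Lemma sqdist_ge0 p q : 0 <= sqdist p q.
Proof. by rewrite addr_ge0 ?sqr_ge0. Qed.

Lemma dist_ge0 p q : 0 <= dist p q.
Proof. exact: sqrtr_ge0. Qed.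

Lemma sqr_dist p q : dist p q ^+ 2 = sqdist p q.
Proof. by rewrite sqr_sqrtr // sqdist_ge0. Qed.

Lemma dot_self_gt0 (u : pt) : u != (0, 0) -> 0 < dot u u.
Proof.
case: u => u1 u2 nz; rewrite /dot /= -!expr2 lt_def addr_ge0 ?sqr_ge0 // andbT.
apply: contra nz; rewrite paddr_eq0 ?sqr_ge0 // !sqrf_eq0.
by case/andP=> /eqP-> /eqP->.
Qed.

Lemma dot_cross_eq0 (a z : pt) : a != (0, 0) -> dot a z = 0 -> cross a z = 0 -> z = (0, 0).
Proof.
move=> /dot_self_gt0 a0 hd hc.
have z1 : dot a a * z.1 = a.1 * dot a z - a.2 * cross a z by rewrite /dot /cross; ring.
have z2 : dot a a * z.2 = a.2 * dot a z + a.1 * cross a z by rewrite /dot /cross; ring.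
move: z1 z2; rewrite hd hc !mulr0 subr0 addr0 => /eqP z1 /eqP z2.
move: z1 z2; rewrite !mulf_eq0 (gt_eqF a0) /= => /eqP z1 /eqP z2.
by case: z z1 z2 {hd hc} => ? ? /= -> ->.
Qed.

Variables (J : finType) (x : J -> pt).
Implicit Types (i j k a b : J) (S T D E : {set J}) (K : {set {set J}}).

Lemma maxdist_ge0 s : 0 <= maxdist x s.
Proof. exact: bigmax_ge_id. Qed.

Lemma dist_le_maxdist s i : dist s (x i) <= maxdist x s.
Proof. exact: (le_bigmax 0 (fun i => dist s (x i)) i). Qed.

Lemma maxdist_le s c : 0 <= c -> (forall i, dist s (x i) <= c) -> maxdist x s <= c.
Proof. by move=> c0 h; apply: bigmax_le. Qed.

Lemma exists_farthest s : (0 < #|J|)%N -> exists i, maxdist x s = dist s (x i).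
Proof.
move/card_gt0P=> [j _]; exists [arg max_(i > j) dist s (x i)]%O.
by apply: (bigmax_eq_arg 0 j predT) => // i _; apply: dist_ge0.
Qed.

Lemma sqdist_le_maxdist s i : sqdist s (x i) <= maxdist x s ^+ 2.
Proof.
rewrite -sqr_dist; have := dist_ge0 s (x i); have := dist_le_maxdist s i; nra.
Qed.

Definition farthest s : {set J} := [set j | sqdist s (x j) == maxdist x s ^+ 2].

Lemma farthestP s j : reflect (Vor x j s) (j \in farthest s).
Proof.
rewrite inE; apply: (iffP eqP) => [h | <-]; last by rewrite sqr_dist.
by rewrite /Vor /dist -/(sqdist s (x j)) h sqrtr_sqr ger0_norm // maxdist_ge0.
Qed.

Definition delta k i : R := (i == k)%:R.

Lemma delta_ge0 k i : 0 <= delta k i.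
Proof. exact: ler0n. Qed.

Lemma sum_delta k (f : J -> R) : \sum_i delta k i * f i = f k.
Proof.
rewrite (bigD1 k) //= /delta eqxx mul1r big1 ?addr0 // => i /negbTE ->.
by rewrite mul0r.
Qed.

Definition weight3 (c1 : R) i (c2 : R) j (c3 : R) k (n : J) : R :=
  c1 * delta i n + c2 * delta j n + c3 * delta k n.

Lemma sum_weight3 c1 i c2 j c3 k (f : J -> R) :
  \sum_n weight3 c1 i c2 j c3 k n * f n = c1 * f i + c2 * f j + c3 * f k.
Proof.
under eq_bigr do rewrite !mulrDl -!mulrA.
by rewrite !big_split /= -!mulr_sumr !sum_delta.
Qed.

Lemma sum_weight3_1 c1 i c2 j c3 k : \sum_n weight3 c1 i c2 j c3 k n = c1 + c2 + c3.
Proof.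
have := sum_weight3 c1 i c2 j c3 k (fun => 1); rewrite !mulr1 => <-.
by under [RHS]eq_bigr do rewrite mulr1.
Qed.

Lemma weight3_ge0 c1 i c2 j c3 k n : 0 <= c1 -> 0 <= c2 -> 0 <= c3 ->
  0 <= weight3 c1 i c2 j c3 k n.
Proof. by move=> *; rewrite !addr_ge0 // mulr_ge0 // delta_ge0. Qed.

Lemma weight3_out c1 i c2 j c3 k n : n != i -> n != j -> n != k ->
  weight3 c1 i c2 j c3 k n = 0.
Proof. by rewrite /weight3 /delta => /negbTE-> /negbTE-> /negbTE->; rewrite !mulr0 !addr0. Qed.

Lemma sum_support D (g : J -> R) : (forall j, j \notin D -> g j = 0) ->
  \sum_(j in D) g j = \sum_j g j.
Proof. by move=> h; rewrite big_mkcond; apply: eq_bigr => j _; case: ifPn => // /h ->. Qed.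

Lemma conv_of_weights S p (l : J -> R) :
  (forall j, 0 <= l j) -> (forall j, j \notin S -> l j = 0) -> \sum_j l j = 1 ->
  \sum_j l j * (x j).1 = p.1 -> \sum_j l j * (x j).2 = p.2 -> conv x S p.
Proof.
move=> l0 lS l1 h1 h2.
have r (f : J -> R) : \sum_(j in S) l j * f j = \sum_j l j * f j.
  by apply: sum_support => j /lS->; rewrite mul0r.
exists l; split=> [j _|]; first exact: l0.
split; first by rewrite sum_support.
by rewrite /comb (r (fun j => (x j).1)) (r (fun j => (x j).2)) h1 h2; case: (p).
Qed.

Lemma conv_weights S p : conv x S p -> exists l : J -> R,
  [/\ forall j, 0 <= l j, forall j, j \notin S -> l j = 0, \sum_j l j = 1,
      \sum_j l j * (x j).1 = p.1 & \sum_j l j * (x j).2 = p.2].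
Proof.
move=> [l [l0 [l1 hc]]]; pose m j := if j \in S then l j else 0.
have ext (f : J -> R) : \sum_j m j * f j = \sum_(j in S) l j * f j.
  by rewrite [RHS]big_mkcond; apply: eq_bigr => j _; rewrite /m; case: ifP; rewrite ?mul0r.
exists m; split.
- by move=> j; rewrite /m; case: ifPn => // /l0.
- by move=> j /negbTE jS; rewrite /m jS.
- by rewrite -l1 [RHS]big_mkcond.
- by rewrite ext -hc.
- by rewrite ext -hc.
Qed.

Lemma conv_subset S T p : S \subset T -> conv x S p -> conv x T p.
Proof.
move=> ST /conv_weights [l [l0 lS l1 h1 h2]]; apply: (conv_of_weights l0) h1 h2 => //.
by move=> j jT; apply: lS; apply: contra jT; apply: (subsetP ST).
Qed.

Lemma relint_conv D s : relint x D s -> conv x D s.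
Proof. by move=> [l [lp h]]; exists l; split=> // j /lp /ltW. Qed.

Lemma relint1 a s : relint x [set a] s -> s = x a.
Proof.
move=> [l [_ [+ <-]]]; rewrite /comb !big_set1 => ->.
by rewrite !mul1r; case: (x a).
Qed.

Lemma exists_extremal_upper (F : pred J) (P Q : J -> R) j0 : F j0 -> 0 <= Q j0 ->
  exists u, [/\ F u, 0 <= Q u &
    forall j, F j -> 0 < Q j -> 0 < Q u /\ 0 <= P j * Q u - Q j * P u].
Proof.
move=> Fj0 Qj0.
case: (pickP (fun j => F j && (0 < Q j))) => [j1 /andP[Fj1 Qj1] | noU]; last first.
  by exists j0; split=> // j Fj Qj; move: (noU j); rewrite Fj Qj.
have [|u /andP[Fu Qu] umax] :=
  @arg_maxP _ _ _ j1 (fun j => F j && (0 < Q j)) (fun j => - (P j / Q j)).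
  by rewrite Fj1.
exists u; split=> // [|j Fj Qj]; first exact: ltW.
split=> //.
have h : - (P j / Q j) <= - (P u / Q u) by apply: umax; rewrite Fj Qj.
have ej : P j = P j / Q j * Q j by rewrite divfK ?gt_eqF.
have eu : P u = P u / Q u * Q u by rewrite divfK ?gt_eqF.
rewrite ej eu; move: (P j / Q j) (P u / Q u) h => a b h.
have -> : a * Q j * Q u - Q j * (b * Q u) = (a - b) * (Q j * Q u) by ring.
by apply: mulr_ge0; [lra | apply: mulr_ge0; apply: ltW].
Qed.

Section PlanarGordan.
Variables (F : pred J) (P Q : J -> R).

Lemma gordan_witness i j k c1 c2 c3 : F i -> F j -> F k ->
  0 <= c1 -> 0 <= c2 -> 0 <= c3 -> 0 < c1 + c2 + c3 ->
  c1 * P i + c2 * P j + c3 * P k = 0 -> c1 * Q i + c2 * Q j + c3 * Q k = 0 ->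
  exists mu : J -> R, [/\ forall n, 0 <= mu n, forall n, ~~ F n -> mu n = 0,
    \sum_n mu n = 1, \sum_n mu n * P n = 0 & \sum_n mu n * Q n = 0].
Proof.
move=> Fi Fj Fk c10 c20 c30 S0 hP hQ; set S := c1 + c2 + c3.
have S1 : S / S = 1 by rewrite divff // gt_eqF.
exists (weight3 (c1 / S) i (c2 / S) j (c3 / S) k); split.
- by move=> n; rewrite weight3_ge0 // divr_ge0 // ltW.
- by move=> n Fn; rewrite weight3_out //; apply: contraNneq Fn => ->.
- by rewrite sum_weight3_1 -!mulrDl.
- by rewrite sum_weight3 -(mul0r S^-1) -hP !mulrDl (mulrAC c1) (mulrAC c2) (mulrAC c3).
- by rewrite sum_weight3 -(mul0r S^-1) -hQ !mulrDl (mulrAC c1) (mulrAC c2) (mulrAC c3).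
Qed.

Lemma extremal_open_halfplane u l : 0 < Q u - Q l -> P u * Q l - Q u * P l < 0 ->
  (forall j, F j -> 0 < Q j -> 0 < Q u /\ 0 <= P j * Q u - Q j * P u) ->
  (forall j, F j -> 0 < - Q j -> 0 < - Q l /\ 0 <= P j * - Q l - - Q j * P l) ->
  (forall j, F j -> Q j = 0 -> 0 < P j) ->
  forall j, F j -> 0 < (Q u - Q l) * P j + (P l - P u) * Q j.
Proof.
move=> gap cr0 uext lext axis j Fj.
have scaled (c W : R) : 0 < c -> 0 < c * W -> 0 < W by move=> c0; rewrite pmulr_rgt0.
case: (ltrgtP (Q j) 0) => Qj.
- have [|Ql0 lj] := lext j Fj; first by rewrite oppr_gt0.
  apply: (scaled (- Q l)) => //.
  have -> : - Q l * ((Q u - Q l) * P j + (P l - P u) * Q j) =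
    (P j * - Q l - - Q j * P l) * (Q u - Q l) + Q j * (P u * Q l - Q u * P l) by ring.
  have := mulr_ge0 lj (ltW gap); have : 0 < Q j * (P u * Q l - Q u * P l) by rewrite nmulr_rgt0.
  lra.
- have [Qu0 uj] := uext j Fj Qj.
  apply: (scaled (Q u)) => //.
  have -> : Q u * ((Q u - Q l) * P j + (P l - P u) * Q j) =
    (P j * Q u - Q j * P u) * (Q u - Q l) - Q j * (P u * Q l - Q u * P l) by ring.
  have := mulr_ge0 uj (ltW gap); have : 0 < Q j * - (P u * Q l - Q u * P l).
    by rewrite mulr_gt0 // oppr_gt0.
  lra.
- by rewrite Qj mulr0 addr0 mulr_gt0 ?axis.
Qed.

(* Gordan's alternative in the plane.  With [u] and [l] the angularly extreme
   vectors of the upper and lower half-planes, either [0] is in the triangle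
   [j0, u, l], or the normal to [u - l] bounds an open half-plane containing
   all the vectors. *)
Lemma planar_gordan j0 : F j0 -> 0 < P j0 -> Q j0 = 0 ->
  (forall w1 w2 : R, exists2 j, F j & w1 * P j + w2 * Q j <= 0) ->
  exists mu : J -> R, [/\ forall n, 0 <= mu n, forall n, ~~ F n -> mu n = 0,
    \sum_n mu n = 1, \sum_n mu n * P n = 0 & \sum_n mu n * Q n = 0].
Proof.
move=> Fj0 Pj0 Qj0 noHalf.
have noOpen w1 w2 : ~ (forall j, F j -> 0 < w1 * P j + w2 * Q j).
  by move=> hw; have [j Fj] := noHalf w1 w2; rewrite leNgt hw.
case: (pickP (fun j => [&& F j, Q j == 0 & P j <= 0])) =>
    [j /and3P[Fj /eqP Qj Pj] | noNeg].
  apply: (@gordan_witness j0 j j0 (- P j) (P j0) 0) => //; rewrite ?Qj ?Qj0.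
  - by rewrite oppr_ge0.
  - exact: ltW.
  - by rewrite addr0; lra.
  - by rewrite mul0r addr0 mulNr mulrC addNr.
  - by rewrite !mulr0 !addr0.
have axis j : F j -> Q j = 0 -> 0 < P j.
  by move=> Fj Qj; move: (noNeg j); rewrite Fj Qj eqxx /= => /negbT; rewrite -ltNge.
case: (pickP (fun j => F j && (Q j != 0))) => [j1 /andP[Fj1 Qj1] | onAxis]; last first.
  exfalso; apply: (noOpen 1 0) => j Fj; rewrite mul1r mul0r addr0 axis //.
  by apply/eqP; move: (onAxis j); rewrite Fj => /negbFE.
have Qj0' : 0 <= Q j0 by rewrite Qj0.
have NQj0 : 0 <= - Q j0 by rewrite Qj0 oppr0.
have [u [Fu Qu uext]] := exists_extremal_upper P Fj0 Qj0'.
have [l [Fl Ql lext]] := @exists_extremal_upper F P (fun j => - Q j) j0 Fj0 NQj0.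
have gap : 0 < Q u - Q l.
  case: (ltrgtP (Q j1) 0) => [Qj1n|Qj1p|]; last by move/eqP: Qj1.
  - by have [|] := lext j1 Fj1; [rewrite oppr_gt0 | lra].
  - by have [] := uext j1 Fj1 Qj1p; lra.
set cr := P u * Q l - Q u * P l.
case: (lerP 0 cr) => hcr.
  apply: (@gordan_witness j0 u l cr (- Q l * P j0) (P j0 * Q u)) => //.
  - by rewrite mulr_ge0 // ltW.
  - by rewrite mulr_ge0 // ltW.
  - have : 0 < P j0 * (Q u - Q l) by rewrite mulr_gt0.
    by rewrite mulrBr; lra.
  - by rewrite /cr; ring.
  - by rewrite /cr Qj0; ring.
exfalso; apply: (noOpen (Q u - Q l) (P l - P u)).
exact: extremal_open_halfplane gap hcr uext lext axis.
Qed.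

End PlanarGordan.

Lemma sqdist_along p (eps : R) v q :
  sqdist (along p eps v) q = sqdist p q + 2 * eps * dot (vsub p q) v + eps ^+ 2 * dot v v.
Proof. by rewrite /sqdist /along /dot /vsub /=; ring. Qed.

(* Squared distances are strictly convex along the segment from [s] to [q];
   compare with the optimum at [s] and let the step shrink to 0. *)
Lemma one_centre_sqdist_le s q : (0 < #|J|)%N -> one_centre x s ->
  maxdist x s ^+ 2 + sqdist q s <= maxdist x q ^+ 2.
Proof.
move=> Jn hs; set d := sqdist q s.
have d0 : 0 <= d := sqdist_ge0 q s.
have step eps : 0 < eps -> eps <= 1 ->
    maxdist x s ^+ 2 + d - maxdist x q ^+ 2 <= eps * d.
  move=> e0 e1; set t := along s eps (vsub q s).
  have [i hi] := exists_farthest t Jn.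
  have ht : maxdist x s ^+ 2 <= sqdist t (x i).
    rewrite -sqr_dist -hi; have := hs t; have := maxdist_ge0 s; nra.
  have tE : sqdist t (x i) = (1 - eps) * sqdist s (x i) + eps * sqdist q (x i)
      - eps * (1 - eps) * d by rewrite /t /d /sqdist /along /vsub /=; ring.
  rewrite tE in ht.
  have hs' : (1 - eps) * sqdist s (x i) <= (1 - eps) * maxdist x s ^+ 2.
    by rewrite ler_wpM2l ?sqdist_le_maxdist // subr_ge0.
  have hq' : eps * sqdist q (x i) <= eps * maxdist x q ^+ 2.
    by rewrite ler_wpM2l ?sqdist_le_maxdist // ltW.
  rewrite -(ler_pM2l e0); lra.
apply/ler_addgt0Pr => e e0; set eps := e / (d + e + 1).
have eps0 : 0 < eps by rewrite divr_gt0 //; lra.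
have epsE : eps * (d + e + 1) = e by rewrite divfK // gt_eqF //; lra.
have eps1 : eps <= 1 by nra.
have := step eps eps0 eps1; nra.
Qed.

Definition step_bound (h g : R) : R := (h + (if 0 < g then 1 else 0)) / (2 * (1 + `|g|)).

Lemma step_bound_gt0 (h g : R) : 0 <= h -> (h = 0 -> 0 < g) -> 0 < step_bound h g.
Proof.
move=> h0 hg; rewrite divr_gt0 //; last by rewrite mulr_gt0 // ltr_wpDr.
case: (ltP 0 g) => [_ | g0]; first by rewrite ltr_wpDl.
by rewrite addr0 lt_def h0 andbT; apply/eqP => /hg; rewrite ltNge g0.
Qed.

Lemma step_bound_pos (h g eps : R) : 0 <= h -> (h = 0 -> 0 < g) ->
  0 < eps -> eps <= step_bound h g -> 0 < h + 2 * eps * g.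
Proof.
move=> h0 hg e0; case: (ltP 0 g) => [g0 _ | g0].
  have : 0 < eps * g by rewrite mulr_gt0.
  lra.
have pos : 0 < 2 * (1 + `|g|) by rewrite mulr_gt0 // ltr_wpDr.
rewrite /step_bound (ltNge 0 g) g0 /= addr0 ler_pdivlMr // => hb.
have : eps * - g <= eps * `|g| by apply: ler_wpM2l; [exact: ltW | rewrite -normrN; exact: ler_norm].
lra.
Qed.

(* Otherwise a step along [w] shorter than every [step_bound] would lower all
   squared distances by more than [one_centre_sqdist_le] allows. *)
Lemma farthest_behind s (w : pt) : (0 < #|J|)%N -> one_centre x s ->
  exists2 j, j \in farthest s & dot (vsub (x j) s) w <= 0.
Proof.
move=> Jn hs; apply: NNPP => hn.
pose h j := maxdist x s ^+ 2 - sqdist s (x j).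
pose g j := dot (vsub (x j) s) w.
have h0 j : 0 <= h j by rewrite subr_ge0 sqdist_le_maxdist.
have hg j : h j = 0 -> 0 < g j.
  move=> /eqP; rewrite subr_eq0 eq_sym => hj; rewrite ltNge; apply/negP => gj.
  by apply: hn; exists j; rewrite ?inE.
have [j1 _] := card_gt0P Jn.
have [k _ kmin] := @arg_minP _ _ _ j1 predT (fun j => step_bound (h j) (g j)) isT.
set eps := step_bound (h k) (g k).
have eps0 : 0 < eps := step_bound_gt0 (h0 k) (@hg k).
have [i hi] := exists_farthest (along s eps w) Jn.
have := one_centre_sqdist_le (along s eps w) Jn hs.
have ss : sqdist s s + 2 * eps * dot (vsub s s) w = 0.
  by rewrite /sqdist /dot /vsub !subrr expr0n /=; ring.
have si : dot (vsub s (x i)) w = - g i by rewrite /g /dot /vsub /=; ring.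
rewrite hi sqr_dist !sqdist_along si ss.
have := step_bound_pos (h0 i) (@hg i) eps0 (kmin i isT).
rewrite /h; lra.
Qed.

(* Rotate so that [x j0 - s] points along the first axis; [farthest_behind]
   then supplies the hypothesis of [planar_gordan]. *)
Lemma one_centre_in_conv_farthest s : (0 < #|J|)%N -> one_centre x s ->
  conv x (farthest s) s.
Proof.
move=> Jn hs; have [j0 Fj0 _] := farthest_behind (0, 0) Jn hs.
set a := vsub (x j0) s.
have [a0 | an0] := eqVneq a (0, 0).
  have [e1 e2] : (x j0).1 = s.1 /\ (x j0).2 = s.2.
    by case: a0 => /eqP + /eqP; rewrite !subr_eq0 => /eqP -> /eqP ->.
  apply: (conv_of_weights (l := delta j0)) => [j|j|||]; rewrite ?sum_delta //.
  - by rewrite /delta; case: eqP => // -> /negP.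
  - by rewrite -[RHS](sum_delta j0 (fun => 1)); apply: eq_bigr => j _; rewrite mulr1.
pose P j := dot a (vsub (x j) s); pose Q j := cross a (vsub (x j) s).
have [||||mu [mu0 muF mu1 muP muQ]] := @planar_gordan (mem (farthest s)) P Q j0.
- exact: Fj0.
- exact: dot_self_gt0.
- by rewrite /Q /cross -/a; ring.
- move=> w1 w2.
  have [j Fj hj] := farthest_behind (w1 * a.1 - w2 * a.2, w1 * a.2 + w2 * a.1) Jn hs.
  by exists j => //; move: hj; rewrite /P /Q /dot /cross /vsub /=; lra.
set z : pt := (\sum_j mu j * (x j).1 - s.1, \sum_j mu j * (x j).2 - s.2).
have lin (c : pt) : \sum_j mu j * dot c (vsub (x j) s) = dot c z.
  rewrite (eq_bigr (fun j => c.1 * (mu j * (x j).1) + c.2 * (mu j * (x j).2)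
    - dot c s * mu j)); last by move=> j _; rewrite /dot /vsub /=; ring.
  by rewrite sumrB big_split /= -!mulr_sumr mu1 /z /dot /=; ring.
have : z = (0, 0).
  apply: (@dot_cross_eq0 a z an0); first by rewrite -lin.
  have -> : cross a z = dot (- a.2, a.1) z by rewrite /cross /dot /=; ring.
  by rewrite -lin -[RHS]muQ; apply: eq_bigr => j _; rewrite /Q /cross /dot /=; ring.
case=> /eqP; rewrite subr_eq0 => /eqP z1 /eqP; rewrite subr_eq0 => /eqP z2.
by apply: (conv_of_weights mu0) => // j; apply: muF.
Qed.

(* Parallel axis theorem. *)
Lemma sum_sqdist_comb D (l : J -> R) s t : \sum_(j in D) l j = 1 -> comb x l D = s ->
  \sum_(j in D) l j * sqdist t (x j) = sqdist t s + \sum_(j in D) l j * sqdist s (x j).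
Proof.
move=> l1 hc.
have c0 (c : pt) : \sum_(j in D) l j * (c.1 * (s.1 - (x j).1) + c.2 * (s.2 - (x j).2)) = 0.
  rewrite (eq_bigr (fun j => (c.1 * s.1 + c.2 * s.2) * l j
    - (c.1 * (l j * (x j).1) + c.2 * (l j * (x j).2)))); last by move=> j _; ring.
  rewrite sumrB big_split /= -!mulr_sumr l1.
  have [-> ->] : \sum_(j in D) l j * (x j).1 = s.1 /\ \sum_(j in D) l j * (x j).2 = s.2.
    by rewrite -hc.
  by rewrite mulr1 subrr.
pose v : pt := (2 * (t.1 - s.1), 2 * (t.2 - s.2)).
rewrite -[RHS]addr0 -[X in _ + X](c0 v) -[sqdist t s]mulr1 -l1 mulr_sumr -!big_split /=.
by apply: eq_bigr => j _; rewrite /sqdist /=; ring.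
Qed.

Lemma one_centre_of_relint_Vor D s : relint x D s -> VorD x D s -> one_centre x s.
Proof.
move=> [l [lpos [l1 hc]]] hv t.
have eD : \sum_(j in D) l j * sqdist s (x j) = maxdist x s ^+ 2.
  rewrite -[RHS]mul1r -l1 mulr_suml; apply: eq_bigr => j jD.
  by congr (_ * _); apply/eqP; move/farthestP: (hv j jD); rewrite inE.
have le_t : \sum_(j in D) l j * sqdist t (x j) <= maxdist x t ^+ 2.
  rewrite -[X in _ <= X]mul1r -l1 mulr_suml; apply: ler_sum => j jD.
  by rewrite ler_wpM2l ?sqdist_le_maxdist ?ltW ?lpos.
rewrite (sum_sqdist_comb t l1 hc) eD in le_t.
have := sqdist_ge0 t s; have := maxdist_ge0 s; have := maxdist_ge0 t; nra.
Qed.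

(* [maxdist x c <= r] and the parallel axis theorem at [c] force equality in
   [maxdist x s ^+ 2 <= \sum_j l j * sqdist s (x j)]. *)
Lemma VorD_of_circumscribed D T s (c : pt) (r : R) : (0 < #|J|)%N -> one_centre x s ->
  D \subset T -> (forall j, j \in T -> dist c (x j) = r) -> (forall i, dist c (x i) <= r) ->
  relint x D s -> VorD x D s.
Proof.
move=> Jn hs DT hT hr [l [lpos [l1 hc]]].
have [i0 _] := card_gt0P Jn.
have r0 : 0 <= r by apply: le_trans (hr i0); apply: dist_ge0.
have onCircle : \sum_(j in D) l j * sqdist c (x j) = r ^+ 2.
  rewrite -[RHS]mul1r -l1 mulr_suml; apply: eq_bigr => j jD.
  by rewrite -sqr_dist hT // (subsetP DT).
have hM : maxdist x c ^+ 2 <= r ^+ 2.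
  by rewrite ler_sqr ?nnegrE ?maxdist_ge0 // maxdist_le.
have hq := one_centre_sqdist_le c Jn hs.
rewrite (sum_sqdist_comb c l1 hc) in onCircle.
pose f j := l j * (maxdist x s ^+ 2 - sqdist s (x j)).
have f0 j : j \in D -> 0 <= f j.
  by move=> jD; rewrite mulr_ge0 ?subr_ge0 ?sqdist_le_maxdist // ltW ?lpos.
have fs : \sum_(j in D) f j = 0.
  apply/eqP; rewrite eq_le sumr_ge0 // andbT.
  rewrite /f; under eq_bigr do rewrite mulrBr.
  rewrite sumrB -mulr_suml l1 mul1r subr_le0; lra.
move=> j jD; apply/farthestP; rewrite inE; apply/eqP.
have /eqP := psumr_eq0P f0 fs jD; rewrite mulf_eq0 (gt_eqF (lpos j jD)) /= subr_eq0.
by move/eqP.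
Qed.

Lemma sum_affine_weights (P : pred J) (l1 l2 f : J -> R) (c1 c2 : R) :
  \sum_(j | P j) (c1 * l1 j + c2 * l2 j) * f j =
  c1 * \sum_(j | P j) l1 j * f j + c2 * \sum_(j | P j) l2 j * f j.
Proof. by rewrite !mulr_sumr -big_split; apply: eq_bigr => j _ /=; ring. Qed.

Lemma aff_indep_weights_eq D (l m : J -> R) : aff_indep x D ->
  \sum_(j in D) l j = \sum_(j in D) m j -> comb x l D = comb x m D ->
  forall j, j \in D -> l j = m j.
Proof.
move=> ai hs; rewrite /comb => -[h1 h2] j jD; apply/eqP; rewrite -subr_eq0; apply/eqP.
apply: (ai (fun j => l j - m j)) => //; first by rewrite sumrB hs subrr.
by rewrite /comb; congr (_, _); under eq_bigr do rewrite mulrBl; rewrite sumrB ?h1 ?h2 subrr.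
Qed.

Lemma relint_subset_conv D S s : aff_indep x D -> relint x D s -> conv x S s ->
  S \subset D -> D \subset S.
Proof.
move=> ai [l [lp [l1 hc]]] /conv_weights [m [m0 mS m1 h1 h2]] SD.
have mD j : j \notin D -> m j = 0.
  by move=> jD; apply: mS; apply: contra jD; apply: (subsetP SD).
have r (f : J -> R) : \sum_(j in D) m j * f j = \sum_j m j * f j.
  by apply: sum_support => j /mD->; rewrite mul0r.
have lm := @aff_indep_weights_eq D l m ai.
apply/subsetP => j jD; apply: contraT => jS.
have := lp j jD; rewrite lm ?mS ?ltxx //; first by rewrite l1 sum_support.
by rewrite hc /comb (r (fun j => (x j).1)) (r (fun j => (x j).2)) h1 h2; case: (s).
Qed.

Lemma relint_subface K D s : triangulation x K -> D \in K -> conv x D s ->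
  exists2 D', D' \in K & D' \subset D /\ relint x D' s.
Proof.
move=> [_ hclos _ _ _] DK [l [l0 [l1 hc]]].
pose D' := [set j in D | 0 < l j].
have sub : D' \subset D by apply/subsetP => j; rewrite inE => /andP [].
have drop (g : J -> R) : (forall j, l j = 0 -> g j = 0) ->
    \sum_(j in D) g j = \sum_(j in D') g j.
  move=> hg; rewrite (big_setID D') /= (setIidPr sub) [X in _ + X]big1 ?addr0 // => j.
  rewrite !inE => /andP [/nandP [/negP // | /negP jl] jD]; apply: hg.
  by apply/eqP; rewrite eq_le l0 // andbT leNgt; apply/negP.
have s1 : \sum_(j in D') l j = 1 by rewrite -drop.
have ne : D' != set0.
  by apply/eqP => e; move: s1; rewrite e big_set0 => /eqP; rewrite eq_sym oner_eq0.
exists D'; first exact: hclos DK sub ne.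
split=> //; exists l; split; first by move=> j; rewrite inE => /andP [].
by split=> //; rewrite -hc /comb !drop // => j ->; rewrite mul0r.
Qed.

Lemma pigeonhole_inf (T : finType) (A : {set T}) (P : nat -> T -> Prop) :
  (forall n, exists2 E, E \in A & P n E) ->
  exists2 E, E \in A & forall N, exists2 n, (N <= n)%N & P n E.
Proof.
move=> h.
suff aux (r : seq T) N0 : (forall n, (N0 <= n)%N -> exists2 E, E \in r & P n E) ->
    exists2 E, E \in r & forall N, exists2 n, (N <= n)%N & P n E.
  have [|E] := aux (enum A) 0%N => [n _|]; last by rewrite mem_enum; exists E.
  by have [E EA pE] := h n; exists E; rewrite ?mem_enum.
elim: r N0 => [|E r IH] N0 hr; first by have [E] := hr N0 (leqnn _).
case: (classic (forall N, exists2 n, (N <= n)%N & P n E)) => [hE | /not_all_ex_not [N1 hN1]].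
  by exists E; rewrite ?mem_head.
have [|E' E'r HE'] := IH (maxn N0 N1).
  move=> n; rewrite geq_max => /andP [n0 n1].
  have [E'' ] := hr n n0; rewrite inE => /orP [/eqP -> pn | E''r pn]; last by exists E''.
  by case: hN1; exists n.
by exists E'; rewrite // inE E'r orbT.
Qed.

Definition invS (n : nat) : R := (n.+1%:R)^-1.

Lemma invS_gt0 n : 0 < invS n.
Proof. by rewrite invr_gt0 ltr0n. Qed.

Lemma invS_le1 n : invS n <= 1.
Proof. by rewrite invr_le1 ?ler1n ?unitfE ?pnatr_eq0. Qed.

Lemma invS_lt n m : (n < m)%N -> invS m < invS n.
Proof. by move=> nm; rewrite ltf_pV2 ?posrE ?ltr0n // ltr_nat ltnS. Qed.

Lemma ge0_of_ge0_along_invS (a b : R) :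
  (forall N, exists2 n, (N <= n)%N & 0 <= a + invS n * b) -> 0 <= a.
Proof.
move=> h; rewrite leNgt; apply/negP => a0.
have K0 : 0 <= `|b| / - a by rewrite divr_ge0 // oppr_ge0 ltW.
have [n Nn] := h (Num.Def.archi_bound (`|b| / - a)).
have nb : `|b| / - a < n.+1%:R.
  by apply: lt_le_trans (archi_boundP K0) _; rewrite ler_nat (leq_trans Nn).
have : invS n * `|b| < - a.
  have e : invS n * (n.+1%:R * - a) = - a by rewrite /invS mulrA mulVf ?pnatr_eq0 // mul1r.
  by rewrite -[X in _ < X]e ltr_pM2l ?invS_gt0 // -ltr_pdivrMr ?oppr_gt0.
have : invS n * b <= invS n * `|b| by apply: ler_wpM2l; [exact/ltW/invS_gt0 | exact: ler_norm].
lra.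
Qed.

(* By affine independence the barycentric coordinates of [p + t v] are affine
   in [t], so their nonnegativity passes to the limit [t = 0]. *)
Lemma conv_of_conv_along E p (v : pt) : aff_indep x E ->
  (forall N, exists2 n, (N <= n)%N & conv x E (along p (invS n) v)) -> conv x E p.
Proof.
move=> ai hf.
have [n1 _ [l1 [l10 [l11 hc1]]]] := hf 0%N.
have [n2 n12 [l2 [l20 [l21 hc2]]]] := hf n1.+1.
set t1 := invS n1; set t2 := invS n2.
have dt : t2 - t1 != 0 by rewrite subr_eq0 lt_eqF // invS_lt.
pose al (t : R) := (t - t1) / (t2 - t1).
pose Lam (t : R) j := (1 - al t) * l1 j + al t * l2 j.
have Lsum (t : R) : \sum_(j in E) Lam t j = 1.
  have := sum_affine_weights (mem E) l1 l2 (fun => 1) (1 - al t) (al t).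
  by rewrite !(eq_bigr _ (fun j _ => mulr1 _)) l11 l21 => ->; ring.
have Lcomb (t : R) : comb x (Lam t) E = along p t v.
  move: hc1 hc2; rewrite /comb /along => -[h11 h12] [h21 h22].
  by rewrite !sum_affine_weights h11 h12 h21 h22 /al -/t1 -/t2; congr (_, _); field.
have Laff (t : R) j : Lam t j = Lam 0 j + t * ((l2 j - l1 j) / (t2 - t1)).
  by rewrite /Lam /al; field.
exists (Lam 0); split; last by rewrite Lsum Lcomb /along !mul0r !addr0; case: (p).
move=> j jE; apply: (ge0_of_ge0_along_invS (b := (l2 j - l1 j) / (t2 - t1))) => N.
have [n Nn [ln [ln0 [ln1 hcn]]]] := hf N.
exists n => //; rewrite -Laff -(@aff_indep_weights_eq E ln (Lam (invS n))) ?ln0 //.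
- by rewrite ln1 Lsum.
- by rewrite hcn Lcomb.
Qed.

Lemma face_at_limit K s (v : pt) : triangulation x K ->
  (forall n, conv x [set: J] (along s (invS n) v)) ->
  exists2 E, E \in K & conv x E s /\ exists n, conv x E (along s (invS n) v).
Proof.
move=> [hK _ _ _ hcov] hq.
have [E EK hE] := @pigeonhole_inf _ K (fun n E => conv x E (along s (invS n) v))
  (fun n => (hcov _).1 (hq n)).
have [_ [_ ai]] := hK E EK.
exists E => //; split; first exact: conv_of_conv_along ai hE.
by have [n _ hn] := hE 0%N; exists n.
Qed.

Lemma conv_along S p j (t : R) : conv x S p -> j \in S -> 0 <= t -> t <= 1 ->
  conv x S (along p t (vsub (x j) p)).
Proof.
move=> /conv_weights [l [l0 lS l1 h1 h2]] jS t0 t1.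
have hsum (f : J -> R) : \sum_i ((1 - t) * l i + t * delta j i) * f i =
    (1 - t) * \sum_i l i * f i + t * f j.
  by rewrite sum_affine_weights sum_delta.
apply: (conv_of_weights (l := fun i => (1 - t) * l i + t * delta j i)).
- by move=> i; rewrite addr_ge0 ?mulr_ge0 ?delta_ge0 ?l0 // subr_ge0.
- move=> i iS; rewrite lS // /delta; case: eqP => [ij|_]; last by rewrite !mulr0 addr0.
  by move: iS; rewrite ij jS.
- by have := hsum (fun => 1); rewrite !(eq_bigr _ (fun i _ => mulr1 _)) l1 => ->; ring.
- by rewrite hsum h1 /along /vsub /=; ring.
- by rewrite hsum h2 /along /vsub /=; ring.
Qed.

Lemma conv2_cross a b p : conv x [set a; b] p -> cross (vsub p (x a)) (vsub (x b) (x a)) = 0.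
Proof.
have [<- _ | ab] := eqVneq a b; first by rewrite /cross /vsub /= !subrr !mulr0 subrr.
move=> [l [_ [+ <-]]]; rewrite /comb /cross /vsub /= !big_setU1 ?inE //= !big_set1.
by move=> lab; rewrite (_ : l a = 1 - l b); [ring | lra].
Qed.

Lemma face_eq_edge K a b s E : triangulation x K -> a != b -> [set a; b] \in K ->
  relint x [set a; b] s -> (forall T, T \in K -> [set a; b] \subset T -> #|T| != 3%N) ->
  E \in K -> conv x E s -> E = [set a; b].
Proof.
move=> [hK _ _ hint _] ab abK rel notri EK cE.
have cI := (hint _ _ abK EK s).1 (conj (relint_conv rel) cE).
have [_ [_ ai]] := hK _ abK.
have abE : [set a; b] \subset E.
  exact: subset_trans (relint_subset_conv ai rel cI (subsetIl _ _)) (subsetIr _ _).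
have [_ [E3 _]] := hK E EK.
apply/eqP; rewrite eq_sym eqEcard abE cards2 ab /=.
by move: E3 (notri E EK abE); rewrite leq_eqVlt => /orP [/eqP -> | ]; rewrite ?eqxx // ltnS.
Qed.

(* Points [s + (x_j - s)/(n+1)] accumulate at [s]; some face contains [s] and
   one of them, and that face can only be the edge [{a, b}] itself. *)
Lemma collinear_of_edge K a b s : triangulation x K -> a != b -> [set a; b] \in K ->
  relint x [set a; b] s -> conv x [set: J] s ->
  (forall T, T \in K -> [set a; b] \subset T -> #|T| != 3%N) ->
  forall j, cross (vsub (x j) s) (vsub (x b) (x a)) = 0.
Proof.
move=> HT ab abK rel cs notri j.
have [E EK [cE [n cEn]]] := face_at_limit HT (fun n =>
  conv_along cs (in_setT j) (ltW (invS_gt0 n)) (invS_le1 n)).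
have Eab := face_eq_edge HT ab abK rel notri EK cE.
rewrite Eab in cE cEn.
have := conv2_cross cEn; have := conv2_cross cE.
set c := cross (vsub (x j) s) (vsub (x b) (x a)).
have -> : cross (vsub (along s (invS n) (vsub (x j) s)) (x a)) (vsub (x b) (x a)) =
  cross (vsub s (x a)) (vsub (x b) (x a)) + invS n * c by rewrite /c /cross /vsub /along /=; ring.
move=> -> /eqP; rewrite add0r mulf_eq0 gt_eqF ?invS_gt0 //=.
by move/eqP.
Qed.

Lemma extreme_of_face K D a : triangulation x K -> D \in K -> a \in D -> extreme x a.
Proof.
move=> [_ hclos hext _ _] DK aD; apply/hext; apply: (hclos _ _ DK).
- by rewrite sub1set.
- by apply/set0Pn; exists a; rewrite inE.
Qed.

Lemma Vor_of_extreme_centre a s : extreme x a -> s = x a ->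
  conv x (farthest s) s -> Vor x a s.
Proof.
move=> ea sa hc; apply: NNPP => na; apply: ea; rewrite -sa.
apply: conv_subset hc; apply/subsetP => j jF; rewrite inE.
by apply/eqP => ja; apply: na; apply/farthestP; rewrite -ja.
Qed.

(* When all of [X] lies on a line through the 1-centre [s], the farthest points
   in the two directions of the line are at the same distance on either side
   of [s], so a non-farthest point would lie strictly between them. *)
Lemma Vor_of_extreme_collinear a s (e : pt) : (0 < #|J|)%N -> one_centre x s ->
  extreme x a -> e != (0, 0) -> (forall j, cross (vsub (x j) s) e = 0) -> Vor x a s.
Proof.
move=> Jn hs ea e0 hcol; apply: NNPP => na.
set r2 := maxdist x s ^+ 2; set E2 := dot e e.
have E20 : 0 < E2 := dot_self_gt0 e0.
pose g j := dot (vsub (x j) s) e.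
have x1 j : (x j).1 = s.1 + g j / E2 * e.1.
  have id : ((x j).1 - s.1) * E2 = g j * e.1 + e.2 * cross (vsub (x j) s) e.
    by rewrite /g /E2 /cross /dot /vsub /=; ring.
  by rewrite hcol mulr0 addr0 in id; rewrite mulrAC -id mulfK ?gt_eqF //; ring.
have x2 j : (x j).2 = s.2 + g j / E2 * e.2.
  have id : ((x j).2 - s.2) * E2 = g j * e.2 - e.1 * cross (vsub (x j) s) e.
    by rewrite /g /E2 /cross /dot /vsub /=; ring.
  by rewrite hcol mulr0 subr0 in id; rewrite mulrAC -id mulfK ?gt_eqF //; ring.
have gsq j : g j ^+ 2 = sqdist s (x j) * E2.
  have id : g j ^+ 2 + cross (vsub (x j) s) e ^+ 2 = sqdist s (x j) * E2.
    by rewrite /g /E2 /cross /dot /vsub /sqdist /=; ring.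
  by rewrite hcol expr0n addr0 in id.
have far j : j \in farthest s -> g j ^+ 2 = r2 * E2 by rewrite gsq inE => /eqP->.
have ha : g a ^+ 2 < r2 * E2.
  rewrite gsq ltr_pM2r // lt_neqAle sqdist_le_maxdist andbT.
  by apply/eqP => h; apply: na; apply/farthestP; rewrite inE h.
have [j1 F1 g1] := farthest_behind e Jn hs.
have [j2 F2 g2] := farthest_behind (- e.1, - e.2) Jn hs.
have {}g1 : g j1 <= 0 by move: g1; rewrite /g /dot /vsub /=.
have {}g2 : 0 <= g j2 by move: g2; rewrite /g /dot /vsub /=; lra.
set rho := g j2.
have rho0 : 0 < rho.
  rewrite lt_def g2 andbT; apply/eqP => r0.
  by move: (far j2 F2) ha; rewrite -/rho r0 expr0n /= => <-; rewrite ltNge sqr_ge0.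
have {}g1 : g j1 = - rho.
  have : (g j1 + rho) * (g j1 - rho) = 0.
    by rewrite mulrC -subr_sqr (far j1 F1) /rho (far j2 F2) subrr.
  by move/eqP; rewrite mulf_eq0 => /orP [/eqP | /eqP]; lra.
have ha2 : g a ^+ 2 < rho ^+ 2 by rewrite /rho (far j2 F2).
have ga1 : - rho < g a by move: ha2 rho0; clear; nra.
have ga2 : g a < rho by move: ha2 rho0; clear; nra.
have aF j : j \in farthest s -> j != a.
  by move=> jF; apply: contraTneq jF => ->; apply/negP => /far; rewrite -/r2 => h; move: ha; rewrite h ltxx.
set lam := (rho + g a) / (2 * rho).
have lam0 : 0 <= lam by rewrite divr_ge0 //; lra.
have lam1 : 0 <= 1 - lam by rewrite subr_ge0 ler_pdivrMr; lra.
have key : g a = lam * rho + (1 - lam) * - rho by rewrite /lam; field; rewrite gt_eqF.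
apply: ea; apply: (conv_of_weights (l := weight3 lam j2 (1 - lam) j1 0 j1)).
- by move=> i; apply: weight3_ge0.
- by move=> i; rewrite inE negbK => /eqP->; rewrite weight3_out // eq_sym aF.
- by rewrite sum_weight3_1; ring.
- by rewrite sum_weight3 (x1 a) (x1 j1) (x1 j2) -/rho g1 key; ring.
- by rewrite sum_weight3 (x2 a) (x2 j1) (x2 j2) -/rho g1 key; ring.
Qed.

Lemma face_vertex_or_edge K D : triangulation x K -> D \in K ->
  (forall T, T \in K -> D \subset T -> #|T| != 3%N) ->
  (exists a, D = [set a]) \/ exists a b, a != b /\ D = [set a; b].
Proof.
move=> [hK _ _ _ _] DK notri; have [D0 [D3 _]] := hK D DK.
have D2 : (#|D| <= 2)%N.
  by move: D3 (notri D DK (subxx D)); rewrite leq_eqVlt => /orP [/eqP -> | ]; rewrite ?eqxx.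
have [/eqP/cards1P [a ->] | n1] := eqVneq #|D| 1%N; first by left; exists a.
right; apply/cards2P; move: D2 n1 D0; rewrite -card_gt0.
by case: #|D| => [|[|[|]]].
Qed.

Lemma VorD_of_relint_face K D s : injective x -> (0 < #|J|)%N -> farthest_delaunay x K ->
  one_centre x s -> D \in K -> relint x D s -> VorD x D s.
Proof.
move=> xinj Jn [HT Hcirc] hs DK rel.
have cF := one_centre_in_conv_farthest Jn hs.
have [[T TK [DT T3]] | notri] :=
  classic (exists2 T, T \in K & D \subset T /\ #|T| = 3%N).
  have [c [r [hc hr]]] := Hcirc T TK T3.
  exact: VorD_of_circumscribed Jn hs DT hc hr rel.
have {}notri T : T \in K -> D \subset T -> #|T| != 3%N.
  by move=> TK DT; apply/eqP => T3; apply: notri; exists T.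
have [[a Da] | [a [b [ab Dab]]]] := face_vertex_or_edge HT DK notri; subst D.
  move=> j; rewrite inE => /eqP->.
  exact: Vor_of_extreme_centre (extreme_of_face HT DK (set11 a)) (relint1 rel) cF.
have col := collinear_of_edge HT ab DK rel (conv_subset (subsetT _) cF) notri.
have e0 : vsub (x b) (x a) != (0, 0).
  apply: contra ab => /eqP [/eqP + /eqP]; rewrite !subr_eq0 => /eqP h1 /eqP h2.
  by apply/eqP/xinj; move: h1 h2; case: (x a) => ? ?; case: (x b) => ? ? /= -> ->.
by move=> j jD; apply: Vor_of_extreme_collinear Jn hs (extreme_of_face HT DK jD) e0 col.
Qed.

End Plane.

Theorem lemma6 (R : realType) (J : finType) (x : J -> pt R)
  (x_inj : injective x) (J_nonempty : (0 < #|J|)%N)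
  (K : {set {set J}}) (HK : farthest_delaunay x K) (s : pt R) :
  one_centre x s <->
  exists2 D, D \in K & relint x D s /\ VorD x D s.
Proof.
split=> [hs | [D _ [rel VD]]]; last exact: one_centre_of_relint_Vor rel VD.
have [[_ _ _ _ hcov] _] := HK.
have cs := conv_subset (subsetT _) (one_centre_in_conv_farthest J_nonempty hs).
have [D DK cD] := (hcov s).1 cs.
have [D' D'K [_ rel]] := relint_subface HK.1 DK cD.
by exists D' => //; split=> //; apply: VorD_of_relint_face x_inj J_nonempty HK hs D'K rel.
Qed.
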